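(* For every single-qubit density operator $\rho$ and every single-qubit Clifford unitary $U$ (a $2\times 2$ unitary normalizing the single-qubit Pauli group), $C(U\rho U^\dagger)=C(\rho)$, where $C$ is computed with $n=1$.
   Context: Let $I,X,Y,Z$ be the Pauli matrices. For $(q,p)\in\mathbb{F}_2^2$ define the single-qubit phase-point operator $A_{(q,p)}=\tfrac12\bigl(I+(-1)^pX+(-1)^{q+p}Y+(-1)^qZ\bigr)$. For $n$ qubits and $\alpha=(\alpha_1,\dots,\alpha_n)\in(\mathbb{F}_2^2)^n$ set $A_\alpha=A_{\alpha_1}\otimes\cdots\otimes A_{\alpha_n}$. The discrete Wigner function of an $n$-qubit operator $\rho$ is $W_\rho(\alpha)=2^{-n}\mathrm{Tr}(\rho A_\alpha)$, regarded as a vector in $\mathbb{R}^{4^n}$. $\mathrm{Stab}_n$ denotes the set of pure $n$-qubit stabilizer states, i.e. density operators $|\psi\rangle\langle\psi|$ with $|\psi\rangle$ the unique common $+1$ eigenvector of an abelian subgroup of the $n$-qubit Pauli group of size $2^n$ (not containing $-I$). The free Wigner polytope is $\mathcal{W}_{\mathrm{free}}=\mathrm{conv}\{W_\sigma:\sigma\in\mathrm{Stab}_n\}$, and the Wigner distance is $C(\rho)=\min_{f\in\mathcal{W}_{\mathrm{free}}}\|W_\rho-f\|_1$. *)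

From HB Require Import structures.
From mathcomp Require Import all_boot all_order all_algebra.
From mathcomp Require Import complex.
From mathcomp Require Import classical_sets reals.
Set Implicit Arguments. Unset Strict Implicit. Unset Printing Implicit Defensive.
Import Order.TTheory GRing.Theory Num.Theory.
Local Open Scope ring_scope.

Notation Cx R := (R[i]).
Definition iC {R : realType} : R[i] := Complex 0 1.

Definition dagger {R : realType} {m n : nat} (A : 'M[R[i]]_(m, n)) : 'M[R[i]]_(n, m) :=
  (map_mx (@conjc R) A)^T.

Definition PI {R : realType} : 'M[R[i]]_2 := 1%:M.
Definition PX {R : realType} : 'M[R[i]]_2 :=
  \matrix_(i < 2, j < 2) (if i == j then 0 else 1).
Definition PY {R : realType} : 'M[R[i]]_2 :=
  \matrix_(i < 2, j < 2)
    (if i == j then 0 else if (i == 0 :> nat) then - iC else iC).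
Definition PZ {R : realType} : 'M[R[i]]_2 :=
  \matrix_(i < 2, j < 2) (if i == j then (if (i == 0 :> nat) then 1 else -1) else 0).

Definition pauli_group {R : realType} (P : 'M[R[i]]_2) : Prop :=
  exists (k : 'I_4) (Q : 'M[R[i]]_2),
    (Q = PI \/ Q = PX \/ Q = PY \/ Q = PZ) /\ P = (iC ^+ k) *: Q.

Definition clifford1 {R : realType} (U : 'M[R[i]]_2) : Prop :=
  U *m dagger U = 1%:M /\ dagger U *m U = 1%:M /\
  forall P, pauli_group P -> pauli_group (U *m P *m dagger U).

Definition density1 {R : realType} (rho : 'M[R[i]]_2) : Prop :=
  dagger rho = rho /\
  (forall v : 'cV[R[i]]_2, 0 <= (dagger v *m rho *m v) 0 0) /\
  \tr rho = 1.

Definition stab1 {R : realType} (sigma : 'M[R[i]]_2) : Prop :=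
  exists (S : seq 'M[R[i]]_2) (psi : 'cV[R[i]]_2),
    [/\ [/\ uniq S, size S = 2%N & forall P, P \in S -> pauli_group P],
        (1%:M \in S) /\ (forall P Q, P \in S -> Q \in S -> P *m Q \in S),
        (forall P Q, P \in S -> Q \in S -> P *m Q = Q *m P),
        (- 1%:M) \notin S &
     [/\ dagger psi *m psi = 1%:M,
         (forall P, P \in S -> P *m psi = psi),
         (forall phi : 'cV[R[i]]_2, (forall P, P \in S -> P *m phi = phi) ->
              exists c : R[i], phi = c *: psi) &
         sigma = psi *m dagger psi]].

Definition sgnb {R : realType} (b : bool) : R[i] := if b then -1 else 1.
Definition phase_point {R : realType} (q p : bool) : 'M[R[i]]_2 :=
  (1 / 2 : R[i]) *: (PI + sgnb p *: PX + sgnb (addb q p) *: PY + sgnb q *: PZ).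

Definition wigner1 {R : realType} (rho : 'M[R[i]]_2) (a : bool * bool) : R :=
  complex.Re ((1 / 2 : R[i]) * \tr (rho *m phase_point a.1 a.2)).

Definition free_wigner1 {R : realType} (f : bool * bool -> R) : Prop :=
  exists (s : seq (R * 'M[R[i]]_2)),
    [/\ (forall x, x \in s -> 0 <= x.1 /\ stab1 x.2),
        \sum_(x <- s) x.1 = 1 &
        forall a, f a = \sum_(x <- s) x.1 * wigner1 x.2 a].

Definition l1dist {R : realType} (f g : bool * bool -> R) : R :=
  \sum_(a : bool * bool) `|f a - g a|.

(** Wigner distance C(rho) (the minimum is attained; we take the infimum). *)
Definition wigner_distance1 {R : realType} (rho : 'M[R[i]]_2) : R :=
  reals.inf [set d : R | exists f, free_wigner1 f /\ d = l1dist (wigner1 rho) f].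

(** Writing c_P(M) = Re tr(M P) / 4, the Wigner function of M is
    W_M(q,p) = c_I + (-1)^p c_X + (-1)^(q+p) c_Y + (-1)^q c_Z.  For trace-one M and a mixture
    f of stabilizer Wigner functions the c_I terms cancel, so |W_M - f|_1 = N(d_X, d_Y, d_Z),
    where d_P is the gap between the P-coefficients of M and of the mixture and
    N(a,b,c) = |a+b+c| + |a+b-c| + |a-b+c| + |a-b-c|.  A Clifford unitary U permutes X, Y, Z up
    to signs, N is invariant under signed permutations, and U maps stabilizer states to
    stabilizer states; hence conjugating M and the mixture by U preserves the distance, and
    the set of distances from W_M can only grow under conjugation.  Applying this also to the
    Clifford unitary U^dagger gives equality. *)

From HB Require Import structures.
From mathcomp Require Import all_boot all_order all_algebra.
From mathcomp Require Import complex.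
From mathcomp Require Import classical_sets reals.
From mathcomp Require Import ring lra.
Set Implicit Arguments. Unset Strict Implicit. Unset Printing Implicit Defensive.
Import GRing.Theory Num.Theory.
Local Open Scope ring_scope.

Section TetraNorm.
Variable K : numDomainType.
Implicit Types (a b c t x y z : K).

Definition phase_comb t x y z (a : bool * bool) : K :=
  t + (-1) ^+ a.2 * x + (-1) ^+ (a.1 (+) a.2) * y + (-1) ^+ a.1 * z.

Definition tetra_norm a b c : K :=
  `|a + b + c| + `|a + b - c| + `|a - b + c| + `|a - b - c|.

Lemma sum_phase_comb0 x y z :
  \sum_(a : bool * bool) `|phase_comb 0 x y z a| = tetra_norm x y z.
Proof.
rewrite -(pair_big xpredT xpredT (fun q p => `|phase_comb 0 x y z (q, p)|)) /=.
rewrite !big_bool /phase_comb /= !mulN1r !mul1r !add0r.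
have -> : - x + - y + z = - (x + y - z) by ring.
have -> : - x + y + - z = - (x - y + z) by ring.
rewrite !normrN /tetra_norm; ring.
Qed.

Lemma phase_comb_sum (T : Type) (s : seq (K * T)) (F0 F1 F2 F3 : T -> K) (a : bool * bool) :
  \sum_(x <- s) x.1 * phase_comb (F0 x.2) (F1 x.2) (F2 x.2) (F3 x.2) a =
  phase_comb (\sum_(x <- s) x.1 * F0 x.2) (\sum_(x <- s) x.1 * F1 x.2)
             (\sum_(x <- s) x.1 * F2 x.2) (\sum_(x <- s) x.1 * F3 x.2) a.
Proof.
by elim: s => [|x s IH]; rewrite ?big_nil ?big_cons ?IH /phase_comb; ring.
Qed.

Lemma phase_combB t x y z t' x' y' z' (a : bool * bool) :
  phase_comb t x y z a - phase_comb t' x' y' z' a =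
  phase_comb (t - t') (x - x') (y - y') (z - z') a.
Proof. by rewrite /phase_comb; ring. Qed.

Lemma tetra_normNl a b c : tetra_norm (- a) b c = tetra_norm a b c.
Proof.
rewrite /tetra_norm -(normrN (- a + b + c)) -(normrN (- a + b - c)).
rewrite -(normrN (- a - b + c)) -(normrN (- a - b - c)).
have -> : - (- a + b + c) = a - b - c by ring.
have -> : - (- a + b - c) = a - b + c by ring.
have -> : - (- a - b + c) = a + b - c by ring.
have -> : - (- a - b - c) = a + b + c by ring.
ring.
Qed.

Lemma tetra_normC12 a b c : tetra_norm a b c = tetra_norm b a c.
Proof.
rewrite /tetra_norm -(normrN (a - b + c)) -(normrN (a - b - c)).
have -> : - (a - b + c) = b - a - c by ring.
have -> : - (a - b - c) = b - a + c by ring.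
rewrite (addrC a b); ring.
Qed.

Lemma tetra_normC23 a b c : tetra_norm a b c = tetra_norm a c b.
Proof.
rewrite /tetra_norm (addrAC a b c) (addrAC a b (- c)) (addrAC a (- b) c).
by rewrite (addrAC a (- b) (- c)); ring.
Qed.

Lemma tetra_norm_sign1 (s : bool) a b c : tetra_norm ((-1) ^+ s * a) b c = tetra_norm a b c.
Proof. by rewrite mulr_sign; case: s; rewrite ?tetra_normNl. Qed.

Lemma tetra_norm_sign2 (s : bool) a b c : tetra_norm a ((-1) ^+ s * b) c = tetra_norm a b c.
Proof. by rewrite tetra_normC12 tetra_norm_sign1 tetra_normC12. Qed.

Lemma tetra_norm_sign3 (s : bool) a b c : tetra_norm a b ((-1) ^+ s * c) = tetra_norm a b c.
Proof. by rewrite tetra_normC23 tetra_norm_sign2 tetra_normC23. Qed.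

Lemma tetra_norm_signed_perm (p : 'I_3 -> 'I_3) (s : 'I_3 -> bool) (x y : 'I_3 -> K) :
  injective p -> (forall j, y (p j) = (-1) ^+ s j * x j) ->
  tetra_norm (y 0) (y 1) (y 2) = tetra_norm (x 0) (x 1) (x 2).
Proof.
move=> p_inj yE.
have ord3 (j : 'I_3) : j = 0 \/ j = 1 \/ j = 2.
  by case: j => [[|[|[|?]]] ?]; [left|right; left|right; right|by []]; exact: val_inj.
have y0 := yE 0; have y1 := yE 1; have y2 := yE 2.
have p01 : p 0 <> p 1 by move/p_inj.
have p02 : p 0 <> p 2 by move/p_inj.
have p12 : p 1 <> p 2 by move/p_inj.
case: (ord3 (p 0)) => [e0|[e0|e0]]; case: (ord3 (p 1)) => [e1|[e1|e1]];
  case: (ord3 (p 2)) => [e2|[e2|e2]];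
  rewrite ?e0 ?e1 ?e2 in y0 y1 y2 p01 p02 p12 => //;
  rewrite y0 y1 y2 !tetra_norm_sign1 !tetra_norm_sign2 !tetra_norm_sign3;
  first [done | by rewrite tetra_normC12 | by rewrite tetra_normC23
        | by rewrite tetra_normC12 tetra_normC23 | by rewrite tetra_normC23 tetra_normC12
        | by rewrite tetra_normC12 tetra_normC23 tetra_normC12].
Qed.

End TetraNorm.

Section UnitaryConjugation.
Context {R : realType}.

Lemma daggerM m n p (A : 'M[R[i]]_(m, n)) (B : 'M[R[i]]_(n, p)) :
  dagger (A *m B) = dagger B *m dagger A.
Proof. by rewrite /dagger (map_mxM (@conjc R : {rmorphism _ -> _})) trmx_mul. Qed.

Lemma daggerK m n (A : 'M[R[i]]_(m, n)) : dagger (dagger A) = A.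
Proof. by apply/matrixP => i j; rewrite !mxE conjcK. Qed.

Variable n : nat.
Implicit Types (U A B : 'M[R[i]]_n).

Definition uconj U A := U *m A *m dagger U.

Lemma uconjZ U a A : uconj U (a *: A) = a *: uconj U A.
Proof. by rewrite /uconj -scalemxAr -scalemxAl. Qed.

Lemma uconjN U A : uconj U (- A) = - uconj U A.
Proof. by rewrite /uconj mulmxN mulNmx. Qed.

Lemma uconj1 U : U *m dagger U = 1%:M -> uconj U 1%:M = 1%:M.
Proof. by rewrite /uconj mulmx1. Qed.

Section Isometry.
Variable U : 'M[R[i]]_n.
Hypothesis UdU : dagger U *m U = 1%:M.

Lemma uconjM A B : uconj U (A *m B) = uconj U A *m uconj U B.
Proof. by rewrite /uconj !mulmxA -[U *m A *m dagger U *m U]mulmxA UdU mulmx1. Qed.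

Lemma uconjK : cancel (uconj U) (uconj (dagger U)).
Proof. by move=> A; rewrite /uconj daggerK !mulmxA UdU mul1mx -mulmxA UdU mulmx1. Qed.

Lemma uconj_inj : injective (uconj U).
Proof. exact: can_inj uconjK. Qed.

Lemma mxtrace_uconj A : \tr (uconj U A) = \tr A.
Proof. by rewrite /uconj mxtrace_mulC mulmxA UdU mul1mx. Qed.

Lemma uconj_signed_dagger (b : bool) A B :
  uconj U A = (-1) ^+ b *: B -> uconj (dagger U) B = (-1) ^+ b *: A.
Proof. by move=> e; rewrite -[B](signrZK b) -e -uconjZ uconjK. Qed.

End Isometry.
End UnitaryConjugation.

Section Pauli.
Context {R : realType}.
Implicit Types (P Q : 'M[R[i]]_2).

Definition pauli (j : 'I_3) : 'M[R[i]]_2 :=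
  if val j == 0%N then PX else if val j == 1%N then PY else PZ.

Lemma iC_sqr : iC ^+ 2 = -1 :> R[i].
Proof. exact: sqr_i. Qed.

Lemma iC_expr_mod4 k : iC ^+ (k %% 4) = iC ^+ k :> R[i].
Proof.
rewrite {2}(divn_eq k 4) exprD mulnC exprM.
by rewrite (exprM iC 2 2) iC_sqr sqrrN expr1n expr1n mul1r.
Qed.

Lemma pauli_sqr j : pauli j *m pauli j = 1%:M.
Proof.
apply/matrixP => a c; rewrite !mxE !big_ord_recl big_ord0 /pauli.
case: j => [[|[|[|?]]] ?] //; rewrite !mxE;
  case: a => [[|[|?]] ?] //; case: c => [[|[|?]] ?] //=;
  by rewrite ?mul0r ?mulr0 ?mul1r ?mulr1 ?add0r ?addr0 ?mulrNN ?mulNr ?mulrN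
             -?expr2 ?iC_sqr ?opprK ?expr1n.
Qed.

(* Refutes three equations between explicit complex numbers (entries of two matrices)
   by comparing real and imaginary parts. *)
Ltac contra_entries :=
  rewrite ?expr0 ?expr1 ?mulN1r ?mul1r ?mulr0 ?mulrN1 ?opprK ?oppr0;
  move=> /eqP + /eqP + /eqP; rewrite !eq_complex /= ?raddfN /=;
  by move=> /andP[/eqP ? /eqP ?] /andP[/eqP ? /eqP ?] /andP[/eqP ? /eqP ?]; lra.

Lemma pauli_signed_inj j1 j2 (b : bool) : pauli j1 = (-1) ^+ b *: pauli j2 -> j1 = j2.
Proof.
move=> /matrixP e; apply/val_inj/eqP/negPn/negP => ne.
have := e 0 0; have := e 0 1; have := e 1 1.
case: j1 j2 ne {e} => [[|[|[|?]]] ?] // [[|[|[|?]]] ?] //= _;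
  rewrite /pauli /= !mxE /=; case: b => /=; contra_entries.
Qed.

Lemma pauli_neq_signed_id j (b : bool) : pauli j <> (-1) ^+ b *: PI.
Proof.
move=> /matrixP e.
have := e 0 0; have := e 0 1; have := e 1 1.
case: j {e} => [[|[|[|?]]] ?] //; rewrite /pauli /PI /= !mxE /=;
  case: b => /=; contra_entries.
Qed.

Lemma iC_expr_even k : ~~ odd k -> iC ^+ k = (-1) ^+ odd k./2 :> R[i].
Proof.
move=> /negbTE k_even.
by rewrite -{1}(odd_double_half k) k_even add0n -mul2n exprM iC_sqr signr_odd.
Qed.

Lemma pauli_groupN P : pauli_group P -> pauli_group (- P).
Proof.
move=> [k [Q [hQ ->]]]; exists (Ordinal (@ltn_pmod (k + 2) 4 isT)), Q; split => //=.
by rewrite iC_expr_mod4 exprD iC_sqr mulrN1 scaleNr.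
Qed.

Lemma pauli_group_sign (b : bool) P : pauli_group P -> pauli_group ((-1) ^+ b *: P).
Proof. by rewrite scaler_sign; case: b => // /pauli_groupN. Qed.

Lemma pauli_group_pauli (k : 'I_4) j : pauli_group (iC ^+ k *: pauli j).
Proof.
exists k, (pauli j); split => //; right.
by case: j => [[|[|[|?]]] ?]; rewrite /pauli /=; auto.
Qed.

Lemma pauli_groupP P : pauli_group P ->
  exists k : 'I_4, P = iC ^+ k *: PI \/ exists j, P = iC ^+ k *: pauli j.
Proof.
move=> [k [Q [hQ ->]]]; exists k.
by case: hQ => [->|[->|[->|->]]]; [left | right; exists 0 | right; exists 1 | right; exists 2].
Qed.

Lemma pauli_group_involution P : pauli_group P -> P *m P = 1%:M ->
  exists b : bool, P = (-1) ^+ b *: PI \/ exists j, P = (-1) ^+ b *: pauli j.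
Proof.
move=> /pauli_groupP [k eP] PP.
have [Q [eQ QQ]] : exists Q, P = iC ^+ k *: Q /\ Q *m Q = 1%:M.
  case: eP => [->|[j ->]]; [exists PI | exists (pauli j)].
    by rewrite /PI mulmx1.
  by rewrite pauli_sqr.
(* (i^k Q)^2 = (-1)^k Q^2 forces k to be even, i.e. i^k = +-1. *)
have sign_k : (-1) ^+ k = 1 :> R[i].
  move/matrixP/(_ 0 0): PP; rewrite eQ -scalemxAl -scalemxAr scalerA QQ.
  by rewrite -exprD addnn -mul2n exprM iC_sqr !mxE mulr1.
have k_even : ~~ odd k.
  apply/negP => k_odd.
  have /signr_inj // : (-1) ^+ true = (-1) ^+ false :> R[i].
  by rewrite -k_odd signr_odd sign_k.
by exists (odd k./2); rewrite -iC_expr_even.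
Qed.
End Pauli.

Section Clifford.
Context {R : realType}.
Implicit Types (U P : 'M[R[i]]_2).

Lemma clifford_pauli_image U : clifford1 U ->
  forall j, exists j' (b : bool), uconj U (pauli j) = (-1) ^+ b *: pauli j'.
Proof.
move=> [UUd [UdU normal]] j.
have hP : pauli_group (uconj U (pauli j)).
  by have := normal _ (pauli_group_pauli ord0 j); rewrite expr0 scale1r.
have sq : uconj U (pauli j) *m uconj U (pauli j) = 1%:M.
  by rewrite -uconjM // pauli_sqr uconj1.
have [b [eI | [j' ej']]] := pauli_group_involution hP sq; last by exists j', b.
exfalso; apply: (@pauli_neq_signed_id R j b).
by rewrite -(uconjK UdU (pauli j)) eI uconjZ uconj1 ?daggerK.
Qed.

Lemma clifford_signed_perm U : clifford1 U ->
  exists (p : 'I_3 -> 'I_3) (s : 'I_3 -> bool),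
    injective p /\ forall j, uconj U (pauli j) = (-1) ^+ s j *: pauli (p j).
Proof.
move=> hU; have [_ [UdU _]] := hU.
have [p hp] := fin_all_exists (clifford_pauli_image hU).
have [s hs] := fin_all_exists hp.
exists p, s; split => // j1 j2 e.
have e1 := uconj_signed_dagger UdU (hs j1).
have e2 := uconj_signed_dagger UdU (hs j2).
rewrite e in e1.
apply: (@pauli_signed_inj R _ _ (s j1 (+) s j2)).
by rewrite signr_addb -scalerA -e2 e1 signrZK.
Qed.

Lemma clifford_dagger_pauli_image U : clifford1 U ->
  forall j', exists j (b : bool), uconj (dagger U) (pauli j') = (-1) ^+ b *: pauli j.
Proof.
move=> hU j'; have [_ [UdU _]] := hU.
have [p [s [p_inj hps]]] := clifford_signed_perm hU.
have [q _ qK] := injF_bij p_inj.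
exists (q j'), (s (q j')); apply: (uconj_signed_dagger UdU).
by rewrite hps qK.
Qed.

Lemma clifford1_dagger U : clifford1 U -> clifford1 (dagger U).
Proof.
move=> hU; have [UUd [UdU _]] := hU.
split; first by rewrite daggerK.
split; first by rewrite daggerK.
move=> P /pauli_groupP [k [->|[j ->]]]; rewrite -[dagger U *m _ *m _]/(uconj _ _) uconjZ.
  by rewrite uconj1 ?daggerK //; exists k, PI; split => //; left.
have [j' [b ->]] := clifford_dagger_pauli_image hU j.
by rewrite scalerA mulrC -scalerA; apply/pauli_group_sign/pauli_group_pauli.
Qed.

End Clifford.

Section WignerDistance.
Context {R : realType}.
Local Notation Re := (@complex.Re R).
Implicit Types (U M P Q : 'M[R[i]]_2) (s : seq (R * 'M[R[i]]_2)).

Lemma mxtrace_stab1 M : stab1 M -> \tr M = 1.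
Proof. by move=> [S [psi [_ _ _ _ [psi_unit _ _ ->]]]]; rewrite mxtrace_mulC psi_unit mxtrace1. Qed.

Lemma stab1_uconj U M : clifford1 U -> stab1 M -> stab1 (uconj U M).
Proof.
move=> [UUd [UdU normal]] [S [psi [[S_uniq S_size S_pauli] [S1 SM] S_comm S_neg]]].
move=> [psi_unit psi_fix psi_uniq ->].
exists (map (uconj U) S), (U *m psi); split.
- split; first by rewrite (map_inj_uniq (uconj_inj UdU)).
  + by rewrite size_map.
  + by move=> _ /mapP [P PS ->]; apply/normal/S_pauli.
- split; first by apply/mapP; exists 1%:M; rewrite ?uconj1.
  by move=> _ _ /mapP [P PS ->] /mapP [Q QS ->]; rewrite -uconjM // map_f // SM.
- by move=> _ _ /mapP [P PS ->] /mapP [Q QS ->]; rewrite -!uconjM // S_comm.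
- apply/mapP => -[P PS eP].
  have P_neg : P = - 1%:M by apply: (uconj_inj UdU); rewrite -eP uconjN uconj1.
  by move: S_neg; rewrite -P_neg PS.
- split.
  + by rewrite daggerM mulmxA -(mulmxA (dagger psi)) UdU mulmx1 psi_unit.
  + by move=> _ /mapP [P PS ->]; rewrite /uconj -!mulmxA (mulmxA (dagger U)) UdU mul1mx psi_fix.
  + move=> phi phi_fix.
    have [c cE] : exists c, dagger U *m phi = c *: psi.
      apply: psi_uniq => P PS; have := phi_fix _ (map_f (uconj U) PS).
      by rewrite /uconj => e; rewrite -{2}e !mulmxA UdU mul1mx.
    by exists c; rewrite scalemxAr -cE mulmxA UUd mul1mx.
  + by rewrite /uconj daggerM !mulmxA.
Qed.

Lemma sgnb_signr b : sgnb b = (-1) ^+ b :> R[i].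
Proof. by case: b. Qed.

Definition pauli_coef P M : R := Re (1 / 2 * (1 / 2) * \tr (M *m P)).

Lemma Re_signrM (b : bool) (z : R[i]) : Re ((-1) ^+ b * z) = (-1) ^+ b * Re z.
Proof. by rewrite !mulr_sign; case: b => //; apply: raddfN. Qed.

Lemma pauli_coefZ (b : bool) P M : pauli_coef ((-1) ^+ b *: P) M = (-1) ^+ b * pauli_coef P M.
Proof. by rewrite /pauli_coef -scalemxAr mxtraceZ mulrCA Re_signrM. Qed.

Lemma pauli_coef_uconj U P M :
  dagger U *m U = 1%:M -> pauli_coef (uconj U P) (uconj U M) = pauli_coef P M.
Proof. by move=> UdU; rewrite /pauli_coef -uconjM // mxtrace_uconj. Qed.

Lemma pauli_coefD P Q M : pauli_coef (P + Q) M = pauli_coef P M + pauli_coef Q M.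
Proof. by rewrite /pauli_coef mulmxDr mxtraceD mulrDr raddfD. Qed.

Lemma wigner1_pauli M a :
  wigner1 M a = phase_comb (pauli_coef PI M) (pauli_coef (pauli 0) M)
                           (pauli_coef (pauli 1) M) (pauli_coef (pauli 2) M) a.
Proof.
case: a => q p.
have -> : wigner1 M (q, p) =
    pauli_coef (PI + sgnb p *: PX + sgnb (q (+) p) *: PY + sgnb q *: PZ) M.
  by rewrite /wigner1 /phase_point /pauli_coef -scalemxAr mxtraceZ mulrA.
by rewrite !pauli_coefD !sgnb_signr !pauli_coefZ.
Qed.

Definition coef_gap P M s : R := pauli_coef P M - \sum_(x <- s) x.1 * pauli_coef P x.2.

Lemma coef_gap_id M s : \tr M = 1 -> (forall x, x \in s -> stab1 x.2) ->
  \sum_(x <- s) x.1 = 1 -> coef_gap PI M s = 0.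
Proof.
move=> trM stab_s sum_s; rewrite /coef_gap /pauli_coef /PI mulmx1 trM.
rewrite (eq_big_seq (fun x => x.1 * Re (1 / 2 * (1 / 2) * 1))); last first.
  by move=> x /stab_s/mxtrace_stab1; rewrite mulmx1 => ->.
by rewrite -mulr_suml sum_s; ring.
Qed.

Lemma l1dist_wigner_mixture M s f : \tr M = 1 -> (forall x, x \in s -> stab1 x.2) ->
  \sum_(x <- s) x.1 = 1 -> (forall a, f a = \sum_(x <- s) x.1 * wigner1 x.2 a) ->
  l1dist (wigner1 M) f =
  tetra_norm (coef_gap (pauli 0) M s) (coef_gap (pauli 1) M s) (coef_gap (pauli 2) M s).
Proof.
move=> trM stab_s sum_s fE.
transitivity (\sum_(a : bool * bool) `|phase_comb (coef_gap PI M s)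
   (coef_gap (pauli 0) M s) (coef_gap (pauli 1) M s) (coef_gap (pauli 2) M s) a|).
  apply: eq_bigr => a _; rewrite fE; under eq_bigr do rewrite wigner1_pauli.
  by rewrite wigner1_pauli phase_comb_sum phase_combB.
by rewrite coef_gap_id // sum_phase_comb0.
Qed.

Lemma coef_gap_uconj U P Q (b : bool) M s :
  dagger U *m U = 1%:M -> uconj U P = (-1) ^+ b *: Q ->
  coef_gap Q (uconj U M) [seq (x.1, uconj U x.2) | x <- s] = (-1) ^+ b * coef_gap P M s.
Proof.
move=> UdU UP.
have coefE N : pauli_coef Q (uconj U N) = (-1) ^+ b * pauli_coef P N.
  by rewrite -(pauli_coef_uconj P N UdU) UP pauli_coefZ signrMK.
rewrite /coef_gap big_map coefE mulrBr mulr_sumr; congr (_ - _).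
by apply: eq_bigr => x _; rewrite /= coefE mulrCA.
Qed.

Local Open Scope classical_set_scope.

Definition wigner_dists M := [set d : R | exists f, free_wigner1 f /\ d = l1dist (wigner1 M) f].

Lemma wigner_dists_uconj U M : clifford1 U -> \tr M = 1 ->
  wigner_dists M `<=` wigner_dists (uconj U M).
Proof.
move=> hU trM _ [f [[s [s_ok sum_s fE]] ->]]; have [_ [UdU _]] := hU.
have stab_s x : x \in s -> stab1 x.2 by move/s_ok => [].
set s' := [seq (x.1, uconj U x.2) | x <- s].
have s'_ok x : x \in s' -> 0 <= x.1 /\ stab1 x.2.
  by move=> /mapP [y /s_ok [y_ge0 y_stab] ->]; split => //; apply: stab1_uconj.
have sum_s' : \sum_(x <- s') x.1 = 1 by rewrite big_map.
exists (fun a => \sum_(x <- s') x.1 * wigner1 x.2 a); split; first by exists s'.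
rewrite (l1dist_wigner_mixture trM stab_s sum_s fE).
rewrite (@l1dist_wigner_mixture _ s') ?mxtrace_uconj //; last by move=> x /s'_ok [].
have [p [b [p_inj pE]]] := clifford_signed_perm hU.
symmetry; apply: (@tetra_norm_signed_perm _ p b (fun j => coef_gap (pauli j) M s)
  (fun j => coef_gap (pauli j) (uconj U M) s') p_inj) => j.
exact: coef_gap_uconj UdU (pE j).
Qed.

End WignerDistance.

Theorem theorem3p1 (R : realType) (rho U : 'M[R[i]]_2) :
  density1 rho -> clifford1 U ->
  wigner_distance1 (U *m rho *m dagger U) = wigner_distance1 rho.
Proof.
move=> [_ [_ tr_rho]] hU; have [_ [UdU _]] := hU.
have tr_Urho : \tr (uconj U rho) = 1 by rewrite mxtrace_uconj.
change (reals.inf (wigner_dists (uconj U rho)) = reals.inf (wigner_dists rho)).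
congr reals.inf; apply/seteqP; split; last exact: wigner_dists_uconj.
by have := wigner_dists_uconj (clifford1_dagger hU) tr_Urho; rewrite uconjK.
Qed.
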